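(* Let $n,d$ be positive integers, $\mathbf{c}\in\mathbb{Z}^n_+$, and $\mathbb{P}\subseteq[0,d]^n$ a bounded polyhedron with $\mathbb{P}\cap\mathbb{Z}^n\ne\emptyset$. Let $a_1=d$ and $a_k=d(1+\sum_{j=1}^{k-1}a_j)$ for $k\in\{2,\dots,n\}$. Consider the following cutting plane algorithm. Set $L_0=\{\mathbf{z}=(z_0,\dots,z_n)\in\mathbb{R}^{n+1}: (z_1,\dots,z_n)\in\mathbb{P},\ z_0=\sum_{i=1}^n c_iz_i\}$. At iteration $t=0,1,2,\dots$, let $\mathbf{z}_t^\star$ be a lexicographically maximum element of $L_t$; if $\mathbf{z}_t^\star$ is integral, stop; otherwise let $k=\min\{j: (\mathbf{z}^\star_t)_j\notin\mathbb{Z}\}$ and set $L_{t+1}=L_t\cap\{\mathbf{z}: z_k+\sum_{j=0}^{k-1}a_{k-j}(z_j-\lceil(\mathbf{z}_t^\star)_j\rceil)\le\lfloor(\mathbf{z}_t^\star)_k\rfloor\}$. If $\mathbf{z}_t^\star$ and $\mathbf{z}_{t+1}^\star$ are both not integral, then $\alpha(\mathbf{z}_{t+1}^\star)<_L\alpha(\mathbf{z}_t^\star)$.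
   Context: Lexicographic order on $\mathbb{R}^{n+1}$: $\mathbf{x}<_L\mathbf{y}$ if there is $k\in\{0,\dots,n\}$ with $x_k<y_k$ and $x_i=y_i$ for all $i<k$; $\mathbf{x}\le_L\mathbf{y}$ means $\mathbf{x}<_L\mathbf{y}$ or $\mathbf{x}=\mathbf{y}$. A lexicographically maximum element of a set $T$ is some $\mathbf{t}\in T$ with $\mathbf{s}\le_L\mathbf{t}$ for all $\mathbf{s}\in T$. For a non-integral $\mathbf{y}=(y_0,\dots,y_n)\in\mathbb{R}\times[0,d]^n$, $\alpha(\mathbf{y})$ is the integral vector with $\alpha(\mathbf{y})_i=\lfloor y_i\rfloor$ for $i\le k$ and $\alpha(\mathbf{y})_i=d$ for $i>k$, where $k=\min\{j: y_j\notin\mathbb{Z}\}$. In the algorithm, the cut added at each iteration is the one of index $k$ (the first non-integral coordinate) among the $n+1$ inequalities $z_i+\sum_{j=0}^{i-1}a_{i-j}(z_j-\lceil (\mathbf{z}_t^\star)_j\rceil)\le\lfloor(\mathbf{z}_t^\star)_i\rfloor$, $i=0,\dots,n$; this is the paper's standing assumption that the learned cut selection policy selects this cut. *)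

From HB Require Import structures.
From mathcomp Require Import all_boot all_order all_algebra.
From mathcomp Require Import reals.
Set Implicit Arguments. Unset Strict Implicit. Unset Printing Implicit Defensive.
Import Order.TTheory GRing.Theory Num.Theory.
Local Open Scope ring_scope.

Section CutDefs.
Variable R : realType.
Variable n : nat.

Definition vec := 'rV[R]_n.+1.

Definition lexlt (x y : vec) : Prop :=
  exists k : 'I_n.+1, x 0 k < y 0 k /\ (forall i : 'I_n.+1, (i < k)%N -> x 0 i = y 0 i).
Definition lexle (x y : vec) : Prop := lexlt x y \/ x = y.

Definition lexmax (T : vec -> Prop) (t : vec) : Prop :=
  T t /\ forall s, T s -> lexle s t.

Definition integral (y : vec) : Prop := forall i : 'I_n.+1, y 0 i \is a Num.int.

Definition first_nonint (y : vec) (k : 'I_n.+1) : bool :=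
  (y 0 k \isn't a Num.int) && [forall j : 'I_n.+1, (j < k)%N ==> (y 0 j \is a Num.int)].

(* the index k = min {j : y_j notin Z} (meaningful when y is non-integral) *)
Definition fni (y : vec) : 'I_n.+1 := odflt ord0 [pick k | first_nonint y k].

Definition alpha (d : nat) (y : vec) : vec :=
  \row_(i < n.+1) (if (i <= fni y)%N then (Num.floor (y 0 i))%:~R else d%:R).

End CutDefs.

(* asum d k = a_1 + ... + a_k, where a_1 = d and a_k = d (1 + sum_{j<k} a_j) *)
Fixpoint asum (d k : nat) : nat :=
  match k with
  | 0 => 0
  | k'.+1 => asum d k' + d * (1 + asum d k')
  end.

Definition acoef (d k : nat) : nat := d * (1 + asum d k.-1).

Section Alg.
Variable R : realType.
Variables (n m d : nat).
Variable c : 'I_n -> nat.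
Variable A : 'M[R]_(m, n).
Variable b : 'cV[R]_m.

Definition inPoly (x : 'rV[R]_n) : Prop :=
  forall i : 'I_m, \sum_(j < n) A i j * x 0 j <= b i 0.

Definition L0 (z : vec R n) : Prop :=
  inPoly (\row_(i < n) z 0 (lift ord0 i)) /\
  z 0 ord0 = \sum_(i < n) (c i)%:R * z 0 (lift ord0 i).

Definition cut (zt z : vec R n) : Prop :=
  let k := fni zt in
  z 0 k + \sum_(j < n.+1 | (j < k)%N)
             (acoef d (k - j))%:R * (z 0 j - (Num.ceil (zt 0 j))%:~R)
    <= (Num.floor (zt 0 k))%:~R.

(* L_t for a run with LP optima z_0, z_1, ... : L_{t+1} = L_t ∩ cut(z_t) *)
Fixpoint Lset (z : nat -> vec R n) (t : nat) : vec R n -> Prop :=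
  match t with
  | 0 => L0
  | t'.+1 => fun y => Lset z t' y /\ cut (z t') y
  end.
End Alg.

From HB Require Import structures.
From mathcomp Require Import all_boot all_order all_algebra.
From mathcomp Require Import reals.
Import Order.TTheory GRing.Theory Num.Theory.
Local Open Scope ring_scope.

(* Since L_{t+1} is contained in L_t, the new optimum y' := z_{t+1} satisfies
   y' <=_L y for y := z_t; let k be the first non-integral index of y, so
   alpha(y) agrees with y before k.  If y' first drops below y at some p < k,
   then y' is integral before p, hence alpha(y') <= y' < y = alpha(y) on
   0..p, strictly at p.  Otherwise y' agrees with y before k, so every term
   a_{k-j} (y'_j - ceil(y_j)) of the cut vanishes and the cut reads
   y'_k <= floor(y_k) = alpha(y)_k; beyond k, alpha(y) equals d, which bounds
   every coordinate of a point of L_0.  Thus y' <= alpha(y) up to the first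
   non-integral index k' >= k of y', and alpha(y')_{k'} = floor(y'_{k'}) is
   strictly below y'_{k'}. *)

Lemma floor_lt_nonint (R : archiRealDomainType) (x : R) :
  x \isn't a Num.int -> (Num.floor x)%:~R < x.
Proof.
move=> x_nonint; rewrite lt_neqAle floor_le andbT.
by apply: contra x_nonint; rewrite intrEfloor.
Qed.

Section FirstNonIntegral.
Context {R : realType} {n d : nat}.
Implicit Types (y : vec R n) (i j : 'I_n.+1).

Lemma fni_int {y j} : (j < fni y)%N -> y 0 j \is a Num.int.
Proof.
rewrite /fni; case: pickP => [k /andP[_ /forallP int_before] /= j_lt_k|_] //.
exact: implyP (int_before j) j_lt_k.
Qed.

Lemma fni_nonint {y} : ~ integral y -> y 0 (fni y) \isn't a Num.int.
Proof.
move=> y_nonint; rewrite /fni; case: pickP => [k /andP[] //|no_first]; exfalso.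
have /forallPn[i i_nonint] : ~~ [forall i, y 0 i \is a Num.int].
  by apply/forallP.
case: (@arg_minnP _ i (fun j => y 0 j \isn't a Num.int) val i_nonint).
move=> j j_nonint j_min.
suff: first_nonint y j by rewrite no_first.
rewrite /first_nonint j_nonint; apply/forallP => l; apply/implyP.
by apply: contraTT; rewrite -leqNgt; apply: j_min.
Qed.

Lemma leq_fni y (q : nat) :
  ~ integral y -> (forall j, (j < q)%N -> y 0 j \is a Num.int) -> (q <= fni y)%N.
Proof.
move=> y_nonint int_before; rewrite leqNgt; apply/negP => /int_before fni_int'.
by move: (fni_nonint y_nonint); rewrite fni_int'.
Qed.

Lemma alpha_le {y i} : (i <= fni y)%N -> alpha d y 0 i <= y 0 i.
Proof. by move=> i_le; rewrite mxE i_le floor_le. Qed.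

Lemma alpha_fni y : alpha d y 0 (fni y) = (Num.floor (y 0 (fni y)))%:~R.
Proof. by rewrite mxE leqnn. Qed.

Lemma alphaE_lt_fni {y i} : (i < fni y)%N -> alpha d y 0 i = y 0 i.
Proof. by move=> i_lt; rewrite mxE ltnW // floorK // fni_int. Qed.

Lemma alphaE_gt_fni {y i} : (fni y < i)%N -> alpha d y 0 i = d%:R.
Proof. by rewrite mxE ltnNge => /negbTE ->. Qed.

End FirstNonIntegral.

Lemma lexlt_prefix {R : realType} {n : nat} {u v : vec R n} (q : 'I_n.+1) :
  (forall i : 'I_n.+1, (i <= q)%N -> u 0 i <= v 0 i) -> u 0 q < v 0 q -> lexlt u v.
Proof.
move=> le_prefix lt_q.
case: (@arg_minnP _ q (fun i => u 0 i < v 0 i) val) => // p lt_p p_min.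
have p_le_q : (p <= q)%N by apply: p_min.
exists p; split=> // i i_lt_p; apply/eqP.
rewrite eq_le le_prefix ?(ltnW (leq_trans i_lt_p _)) //=.
by apply: contraTT i_lt_p; rewrite -ltNge => /p_min; rewrite leqNgt.
Qed.

Section AlphaDecrease.
Variables (R : realType) (n d : nat) (y y' : vec R n).
Hypothesis y'_nonint : ~ integral y'.
Let k := fni y.
Let k' := fni y'.

Lemma alpha_lt_drop_before_fni (p : 'I_n.+1) :
  (p < k)%N -> y' 0 p < y 0 p -> (forall i : 'I_n.+1, (i < p)%N -> y' 0 i = y 0 i) ->
  lexlt (alpha d y') (alpha d y).
Proof.
move=> p_lt_k lt_p eq_before.
have p_le_k' : (p <= k')%N.
  apply: leq_fni => // j j_lt_p.
  by rewrite eq_before // fni_int // (ltn_trans j_lt_p).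
have alpha_y'_le (i : 'I_n.+1) : (i <= p)%N -> alpha d y' 0 i <= y' 0 i.
  by move=> i_le_p; apply: alpha_le (leq_trans i_le_p p_le_k').
apply: (lexlt_prefix p).
  move=> i i_le_p; apply: le_trans (alpha_y'_le i i_le_p) _.
  rewrite alphaE_lt_fni ?(leq_ltn_trans i_le_p) //.
  by case: ltngtP i_le_p => // [/eq_before -> | /val_inj ->] //; rewrite ltW.
by apply: le_lt_trans (alpha_y'_le p (leqnn p)) _; rewrite alphaE_lt_fni.
Qed.

Lemma alpha_lt_agree_before_fni :
  (forall i : 'I_n.+1, (i < k)%N -> y' 0 i = y 0 i) ->
  y' 0 k <= (Num.floor (y 0 k))%:~R ->
  (forall i : 'I_n.+1, (k < i)%N -> y' 0 i <= d%:R) ->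
  lexlt (alpha d y') (alpha d y).
Proof.
move=> eq_before le_floor le_d.
have k_le_k' : (k <= k')%N.
  by apply: leq_fni => // j j_lt_k; rewrite eq_before // fni_int.
have y'_le_alpha (i : 'I_n.+1) : y' 0 i <= alpha d y 0 i.
  case: (ltngtP i k) => [i_lt_k | k_lt_i | /val_inj ->].
  - by rewrite alphaE_lt_fni // eq_before.
  - by rewrite alphaE_gt_fni // le_d.
  - by rewrite alpha_fni.
apply: (lexlt_prefix k') => [i i_le_k'|].
  exact: le_trans (alpha_le i_le_k') (y'_le_alpha i).
apply: lt_le_trans (y'_le_alpha k'); rewrite alpha_fni.
exact: floor_lt_nonint (fni_nonint y'_nonint).
Qed.

End AlphaDecrease.

Section CuttingPlane.
Context {R : realType} {n m d : nat} {c : 'I_n -> nat}.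
Context {A : 'M[R]_(m, n)} {b : 'cV[R]_m}.

Lemma Lset_L0 {z : nat -> vec R n} {t : nat} {y : vec R n} :
  Lset d c A b z t y -> L0 c A b y.
Proof. by elim: t y => [|t IH] y //= [/IH]. Qed.

Lemma L0_le_box {y : vec R n} :
  (forall x : 'rV[R]_n, inPoly A b x -> forall i : 'I_n, 0 <= x 0 i <= d%:R) ->
  L0 c A b y -> forall i : 'I_n.+1, (0 < i)%N -> y 0 i <= d%:R.
Proof.
move=> box [y_poly _] i i_gt0.
case: (unliftP ord0 i) => [j ->|i0]; last by rewrite i0 in i_gt0.
by have /andP[_] := box _ y_poly j; rewrite mxE.
Qed.

Lemma cut_agree_before_fni {zt y : vec R n} :
  (forall i : 'I_n.+1, (i < fni zt)%N -> y 0 i = zt 0 i) ->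
  cut d zt y -> y 0 (fni zt) <= (Num.floor (zt 0 (fni zt)))%:~R.
Proof.
rewrite /cut /= => eq_before; rewrite big1 ?addr0 // => j j_lt.
by rewrite eq_before // ceilK ?fni_int // subrr mulr0.
Qed.

End CuttingPlane.

Theorem lemma2 (R : realType) (n d m : nat) (c : 'I_n -> nat)
    (A : 'M[R]_(m, n)) (b : 'cV[R]_m)
    (z : nat -> vec R n) (t : nat) :
  (0 < n)%N -> (0 < d)%N ->
  (* P is contained in [0,d]^n (hence bounded) *)
  (forall x : 'rV[R]_n, inPoly A b x ->
     forall i : 'I_n, 0 <= x 0 i <= d%:R) ->
  (* P contains an integer point *)
  (exists x : 'rV[R]_n, inPoly A b x /\ forall i : 'I_n, x 0 i \is a Num.int) ->
  (* z_s is a lexicographically maximum element of L_s, for s = 0..t+1 *)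
  (forall s, (s <= t.+1)%N -> lexmax (Lset d c A b z s) (z s)) ->
  (* the algorithm has not stopped before iteration t+1 ... *)
  (forall s, (s < t)%N -> ~ integral (z s)) ->
  (* ... and z_t, z_{t+1} are both not integral *)
  ~ integral (z t) -> ~ integral (z t.+1) ->
  lexlt (alpha d (z t.+1)) (alpha d (z t)).
Proof.
(* With the junk value fni = 0 on integral points, the argument never needs
   z_t to be non-integral. *)
move=> _ _ box _ opt _ _ zt1_nonint.
have [[in_Lt in_cut] _] := opt t.+1 (leqnn _).
have le_zt := (opt t (leqnSn _)).2 _ in_Lt.
have le_d := L0_le_box box (Lset_L0 in_Lt).
have agree_case : (forall i : 'I_n.+1, (i < fni (z t))%N -> z t.+1 0 i = z t 0 i) ->
    lexlt (alpha d (z t.+1)) (alpha d (z t)).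
  move=> eq_before; apply: alpha_lt_agree_before_fni => //.
    exact: cut_agree_before_fni in_cut.
  by move=> i /(leq_ltn_trans (leq0n _)); apply: le_d.
case: le_zt => [[p [lt_p eq_before]] | eq_zt]; last first.
  by apply: agree_case => i _; rewrite eq_zt.
case: (ltnP p (fni (z t))) => [p_lt_k | k_le_p].
  exact: alpha_lt_drop_before_fni p_lt_k lt_p eq_before.
by apply: agree_case => i i_lt_k; apply: eq_before (leq_trans i_lt_k k_le_p).
Qed.
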